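(* Let $\mathcal{H}$ and $\mathcal{K}$ be finite-dimensional complex Hilbert spaces and let $\Psi: B(\mathcal{H})\to B(\mathcal{K})$ be a Hermitian-preserving trace-preserving linear map, with dual (adjoint) map $\Psi^*: B(\mathcal{K})\to B(\mathcal{H})$ defined by $\operatorname{Tr}(\Psi^*(Y)^\dagger X)=\operatorname{Tr}(Y^\dagger\Psi(X))$ for all $X\in B(\mathcal{H})$, $Y\in B(\mathcal{K})$. Then exactly one of the following holds: (1) $\Psi$ is semi-positive, i.e. there is an invertible density matrix $\rho\in B(\mathcal{H})$ such that $\Psi(\rho)$ is an invertible density matrix; (2) $-\Psi^*$ is semi-nonnegative, i.e. there is a density matrix $\sigma\in B(\mathcal{K})$ such that $-\Psi^*(\sigma)$ is positive semidefinite.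
   Context: $B(\mathcal{H})$ denotes all linear operators on $\mathcal{H}$; a density matrix is a positive semidefinite operator of trace one. A map is Hermitian-preserving if $\Psi(X^\dagger)=\Psi(X)^\dagger$ and trace-preserving if $\operatorname{Tr}\Psi(X)=\operatorname{Tr}X$. *)

From HB Require Import structures.
From mathcomp Require Import all_boot all_order all_algebra.
From mathcomp Require Import sesquilinear spectral.
From mathcomp Require Import complex.
From mathcomp Require Import reals.
Set Implicit Arguments. Unset Strict Implicit. Unset Printing Implicit Defensive.
Import Order.TTheory GRing.Theory Num.Theory.
Local Open Scope ring_scope.
Local Open Scope sesquilinear_scope.

Section Defs.
Variable C : numClosedFieldType.

(* positive semidefinite: v^* A v >= 0 (real nonnegative) for all v *)
Definition psd n (A : 'M[C]_n) : Prop :=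
  forall v : 'cV[C]_n, 0 <= (v ^t* *m A *m v) 0 0.

Definition density n (A : 'M[C]_n) : Prop := psd A /\ \tr A = 1.

Definition invertible_density n (A : 'M[C]_n) : Prop :=
  density A /\ A \in unitmx.

Definition hermitian_preserving n m (Psi : 'M[C]_n -> 'M[C]_m) : Prop :=
  forall X, Psi (X ^t*) = (Psi X) ^t*.

Definition trace_preserving n m (Psi : 'M[C]_n -> 'M[C]_m) : Prop :=
  forall X, \tr (Psi X) = \tr X.

Definition is_dual_map n m (Psi : 'M[C]_n -> 'M[C]_m)
  (Psistar : 'M[C]_m -> 'M[C]_n) : Prop :=
  forall X Y, \tr ((Psistar Y) ^t* *m X) = \tr (Y ^t* *m Psi X).

Definition semi_positive n m (Psi : 'M[C]_n -> 'M[C]_m) : Prop :=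
  exists rho, invertible_density rho /\ invertible_density (Psi rho).

Definition semi_nonnegative n m (Phi : 'M[C]_n -> 'M[C]_m) : Prop :=
  exists sigma, density sigma /\ psd (Phi sigma).
End Defs.

From HB Require Import structures.
From mathcomp Require Import all_boot all_order all_algebra.
From mathcomp Require Import sesquilinear spectral complex reals.
From mathcomp Require Import classical_sets topology normedtype derive.
From mathcomp Require Import ring lra.
Import Order.TTheory GRing.Theory Num.Theory.
Import numFieldTopology.Exports numFieldNormedType.Exports.

(* Exclusivity: if [rho] and [Psi rho] are invertible density matrices and [- Psi^* sigma]
   is psd for a density matrix [sigma], then [Tr (sigma Psi rho) = Tr (Psi^* sigma rho)] would
   be both positive and nonpositive.
   Existence: minimize the squared Hilbert-Schmidt norm of [Psi^* sigma + Q] over density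
   matrices [sigma] and psd matrices [Q] (with [Q] confined to a large box, for compactness).
   If the minimum is [0], [- Psi^* sigma = Q] is psd. Otherwise the minimizer
   [w = Psi^* sigma + Q] is Hermitian and the first-order optimality conditions give
   [w >= 0] and [Psi w >= |w|^2 > 0]; then [w + d I] for a small [d > 0], normalized by its
   trace, is an invertible density matrix with [Psi (w + d I)] invertible. *)

Set Implicit Arguments. Unset Strict Implicit. Unset Printing Implicit Defensive.
Local Open Scope complex_scope.
Local Open Scope ring_scope.
Local Open Scope sesquilinear_scope.

Lemma ge0_of_small_quadratic (R : realFieldType) (a b e : R) : 0 < e -> 0 <= b ->
  (forall t, 0 < t -> t <= e -> 0 <= 2 * t * a + t ^+ 2 * b) -> 0 <= a.
Proof.
move=> e_gt0 b_ge0 small; rewrite leNgt; apply/negP => a_lt0.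
have b1_gt0 : 0 < b + 1 by lra.
pose t := Num.min e (- a / (b + 1)).
have t_gt0 : 0 < t by rewrite lt_min e_gt0 divr_gt0 // oppr_gt0.
have t_le : t * (b + 1) <= - a by rewrite -ler_pdivlMr // ge_min lexx orbT.
have t_le_e : t <= e by rewrite /t ge_min lexx.
have := small t t_gt0 t_le_e.
have := ler_wpM2l (ltW t_gt0) t_le; have := mulr_gt0 t_gt0 t_gt0.
have : 0 < t * - a by rewrite mulr_gt0 // oppr_gt0.
rewrite expr2; nra.
Qed.

Lemma norm_le_of_sqr (R : realDomainType) (a c : R) : a ^+ 2 <= c -> `|a| <= 1 + c.
Proof.
move=> sqr_le; have c_ge0 : 0 <= c by apply: le_trans sqr_le; exact: sqr_ge0.
have [a_le1|a_gt1] := lerP `|a| 1; first lra.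
have : `|a| <= `|a| ^+ 2 by rewrite expr2 ler_peMl // ltW.
rewrite real_normK ?num_real //; lra.
Qed.

Lemma ler_sum_sum_entry (R : numDomainType) a b (F : 'I_a -> 'I_b -> R) i j :
  (forall i j, 0 <= F i j) -> F i j <= \sum_i \sum_j F i j.
Proof.
move=> F_ge0; rewrite (bigD1 i) //= (bigD1 j) //= -addrA lerDl.
by rewrite addr_ge0 ?sumr_ge0 // => k _; rewrite ?sumr_ge0.
Qed.

Section ComplexParts.
Variable R : rcfType.
Local Notation Re := (@complex.Re R).
Local Notation Im := (@complex.Im R).
Implicit Types (a b : R[i]) (r : R).

Lemma ReD a b : Re (a + b) = Re a + Re b. Proof. by case: a; case: b. Qed.
Lemma ImD a b : Im (a + b) = Im a + Im b. Proof. by case: a; case: b. Qed.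
Lemma ReN a : Re (- a) = - Re a. Proof. by case: a. Qed.
Lemma ImN a : Im (- a) = - Im a. Proof. by case: a. Qed.
Lemma Re_mulc a b : Re (a * b) = Re a * Re b - Im a * Im b.
Proof. by case: a; case: b. Qed.
Lemma Im_mulc a b : Im (a * b) = Re a * Im b + Im a * Re b.
Proof. by case: a => ? ?; case: b => ? ? /=; ring. Qed.
Lemma ReJ a : Re a^* = Re a. Proof. by case: a. Qed.
Lemma ImJ a : Im a^* = - Im a. Proof. by case: a. Qed.
Lemma Re_real r : Re r%:C = r. Proof. by []. Qed.

Lemma conjC_real_complex r : r%:C^* = r%:C.
Proof. exact: conjc_real. Qed.

Lemma Re_realM r a : Re (r%:C * a) = r * Re a.
Proof. by rewrite Re_mulc /= mul0r subr0. Qed.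
Lemma Im_realM r a : Im (r%:C * a) = r * Im a.
Proof. by rewrite Im_mulc /= mul0r addr0. Qed.

Lemma Re_sum I (s : seq I) (F : I -> R[i]) :
  Re (\sum_(i <- s) F i) = \sum_(i <- s) Re (F i).
Proof. by elim: s => [|x s IH]; rewrite ?big_nil ?big_cons ?ReD ?IH. Qed.

Lemma complex_eq_Re a : Im a = 0 -> a = (Re a)%:C.
Proof. by case: a => ? ? /= ->. Qed.

End ComplexParts.

Section RealDot.
Variables (R : rcfType) (p q : nat).
Local Notation Re := (@complex.Re R).
Local Notation Im := (@complex.Im R).
Implicit Types A B S X Y : 'M[R[i]]_(p, q).

Definition redot A B : R :=
  \sum_i \sum_j (Re (A i j) * Re (B i j) + Im (A i j) * Im (B i j)).

Lemma redotC A B : redot A B = redot B A.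
Proof. by apply: eq_bigr => i _; apply: eq_bigr => j _; rewrite mulrC [Im _ * _]mulrC. Qed.

Lemma redotDr A B1 B2 : redot A (B1 + B2) = redot A B1 + redot A B2.
Proof.
rewrite /redot -big_split; apply: eq_bigr => i _; rewrite -big_split.
by apply: eq_bigr => j _; rewrite /= !mxE ReD ImD; ring.
Qed.

Lemma redotZr r A B : redot A (r%:C *: B) = r * redot A B.
Proof.
rewrite /redot mulr_sumr; apply: eq_bigr => i _; rewrite mulr_sumr.
by apply: eq_bigr => j _; rewrite !mxE Re_realM Im_realM; ring.
Qed.

Lemma redotNr A B : redot A (- B) = - redot A B.
Proof.
have -> : - B = (-1)%:C *: B by rewrite rmorphN1 scaleN1r.
by rewrite redotZr mulN1r.
Qed.

Lemma redotBr A B1 B2 : redot A (B1 - B2) = redot A B1 - redot A B2.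
Proof. by rewrite redotDr redotNr. Qed.

Lemma redotDl A1 A2 B : redot (A1 + A2) B = redot A1 B + redot A2 B.
Proof. by rewrite redotC redotDr !(redotC B). Qed.

Lemma redotZl r A B : redot (r%:C *: A) B = r * redot A B.
Proof. by rewrite redotC redotZr redotC. Qed.

Lemma redotNl A B : redot (- A) B = - redot A B.
Proof. by rewrite redotC redotNr redotC. Qed.

Lemma redotBl A1 A2 B : redot (A1 - A2) B = redot A1 B - redot A2 B.
Proof. by rewrite redotDl redotNl. Qed.

Lemma redot0r A : redot A 0 = 0.
Proof. by rewrite /redot big1 // => i _; rewrite big1 // => j _; rewrite mxE /= !mulr0 addr0. Qed.

Lemma redot_entry_le A i j : Re (A i j) ^+ 2 + Im (A i j) ^+ 2 <= redot A A.
Proof. by rewrite !expr2; apply: ler_sum_sum_entry => k l; rewrite -!expr2 addr_ge0 ?sqr_ge0. Qed.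

Lemma redot_ge0 A : 0 <= redot A A.
Proof. by apply: sumr_ge0 => i _; apply: sumr_ge0 => j _; rewrite -!expr2 addr_ge0 ?sqr_ge0. Qed.

Lemma redot_eq0 A : redot A A = 0 -> A = 0.
Proof.
move=> A0; apply/matrixP => i j; rewrite mxE.
have := redot_entry_le A i j; rewrite A0 => le0.
have /eqP Re0 : Re (A i j) == 0.
  by rewrite -sqrf_eq0 eq_le sqr_ge0 andbT; apply: le_trans le0; rewrite lerDl sqr_ge0.
have /eqP Im0 : Im (A i j) == 0.
  by rewrite -sqrf_eq0 eq_le sqr_ge0 andbT; apply: le_trans le0; rewrite lerDr sqr_ge0.
by case: (A i j) Re0 Im0 => ? ? /= -> ->.
Qed.

Lemma redot_gt0 A : A != 0 -> 0 < redot A A.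
Proof.
by move=> A_neq0; rewrite lt_def redot_ge0 andbT; apply: contra A_neq0 => /eqP/redot_eq0->.
Qed.

Lemma redot_trace A B : redot A B = Re (\tr (A ^t* *m B)).
Proof.
rewrite /mxtrace Re_sum /redot exchange_big; apply: eq_bigr => j _.
rewrite mxE Re_sum; apply: eq_bigr => i _.
by rewrite !mxE Re_mulc ReJ ImJ mulNr opprK.
Qed.

Lemma redot_AMGM (l : R) X Y : 0 < l ->
  2 * `|redot X Y| <= l * redot X X + l^-1 * redot Y Y.
Proof.
move=> l_gt0.
have le_AMGM Z : 2 * redot X Z <= l * redot X X + l^-1 * redot Z Z.
  have := redot_ge0 (l%:C *: X - Z).
  rewrite redotBl !redotBr !redotZl !redotZr (redotC Z) => sq_ge0.
  have : 0 <= l^-1 by rewrite invr_ge0 ltW.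
  move=> /mulr_ge0/(_ sq_ge0).
  suff -> : l^-1 * (l * (l * redot X X) - l * redot X Z - (l * redot X Z - redot Z Z)) =
    l * redot X X - 2 * redot X Z + l^-1 * redot Z Z by lra.
  by field; rewrite gt_eqF.
have := le_AMGM Y; have := le_AMGM (- Y); rewrite redotNr redotNl redotNr opprK.
by case: (lerP 0 (redot X Y)) => [/ger0_norm|/ltr0_norm] ->; lra.
Qed.

Definition mx_box c A := forall i j, `|Re (A i j)| <= c /\ `|Im (A i j)| <= c.

Definition mx_l1 A : R := \sum_i \sum_j (`|Re (A i j)| + `|Im (A i j)|).

Lemma mx_l1_ge0 A : 0 <= mx_l1 A.
Proof. by apply: sumr_ge0 => i _; apply: sumr_ge0 => j _; rewrite addr_ge0. Qed.

Lemma mx_box_convex c t A B : mx_box c A -> mx_box c B -> 0 <= t <= 1 ->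
  mx_box c (A + t%:C *: (B - A)).
Proof.
move=> A_box B_box /andP[t_ge0 t_le1] i j.
rewrite !mxE ReD ImD Re_realM Im_realM !(ReD, ImD, ReN, ImN).
have convex_le (x y : R) : `|x| <= c -> `|y| <= c -> `|x + t * (y - x)| <= c.
  rewrite -[x + _](_ : (1 - t) * x + t * y = _); last by ring.
  move=> x_le y_le; apply: le_trans (ler_normD _ _) _.
  rewrite !normrM (ger0_norm t_ge0) ger0_norm ?subr_ge0 //.
  have t'_ge0 : 0 <= 1 - t by rewrite subr_ge0.
  by have := ler_wpM2l t_ge0 y_le; have := ler_wpM2l t'_ge0 x_le; lra.
by have [? ?] := A_box i j; have [? ?] := B_box i j; split; apply: convex_le.
Qed.

Lemma redot_box_le S B : mx_box 1 S -> `|redot S B| <= mx_l1 B.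
Proof.
move=> S_box; apply: le_trans (ler_norm_sum _ _ _) _; apply: ler_sum => i _.
apply: le_trans (ler_norm_sum _ _ _) _; apply: ler_sum => j _.
have [Re_le1 Im_le1] := S_box i j.
apply: le_trans (ler_normD _ _) _; rewrite !normrM.
by apply: lerD; rewrite -[leRHS]mul1r ler_wpM2r.
Qed.

Lemma redot_delta_scale c B i j :
  redot (c *: delta_mx i j) B = Re c * Re (B i j) + Im c * Im (B i j).
Proof.
rewrite /redot (bigD1 i) //= (bigD1 j) //= !mxE !eqxx mulr1 /=.
rewrite big1 => [|k /negbTE k_neq]; last by rewrite !mxE k_neq andbF mulr0 /= !mul0r addr0.
rewrite big1 ?addr0 // => k /negbTE k_neq.
by rewrite big1 // => l _; rewrite !mxE k_neq mulr0 /= !mul0r addr0.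
Qed.

Lemma redot_delta i j B : redot (delta_mx i j) B = Re (B i j).
Proof. by rewrite -[delta_mx i j]scale1r redot_delta_scale /= mul1r mul0r addr0. Qed.

Lemma redot_idelta i j B : redot ('i%C *: delta_mx i j) B = Im (B i j).
Proof. by rewrite redot_delta_scale /= mul1r mul0r add0r. Qed.

End RealDot.

Section ConjTranspose.
Variable C : numClosedFieldType.

Lemma trmxC_mul m n p (A : 'M[C]_(m, n)) (B : 'M[C]_(n, p)) : (A *m B)^t* = B^t* *m A^t*.
Proof. by rewrite trmx_mul map_mxM. Qed.

Lemma trmxC_add m n (A B : 'M[C]_(m, n)) : (A + B)^t* = A^t* + B^t*.
Proof. by rewrite linearD map_mxD. Qed.

Lemma trmxC_opp m n (A : 'M[C]_(m, n)) : (- A)^t* = - A^t*.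
Proof. by rewrite linearN map_mxN. Qed.

Lemma trmxC_scale m n (c : C) (A : 'M[C]_(m, n)) : (c *: A)^t* = c^* *: A^t*.
Proof. by apply/matrixP => i j; rewrite !mxE rmorphM. Qed.

Lemma trmxC_mx11 (A : 'M[C]_1) : A^t* 0 0 = (A 0 0)^*.
Proof. by rewrite !mxE. Qed.

End ConjTranspose.

Section QuadraticForm.
Variables (C : numClosedFieldType) (n : nat).
Implicit Types (A B N S : 'M[C]_n) (u v w : 'cV[C]_n).

Definition hform u w A : C := (u^t* *m A *m w) 0 0.
Definition qform v A : C := hform v v A.

Lemma hformDl u1 u2 w A : hform (u1 + u2) w A = hform u1 w A + hform u2 w A.
Proof. by rewrite /hform trmxC_add !mulmxDl mxE. Qed.
Lemma hformDr u w1 w2 A : hform u (w1 + w2) A = hform u w1 A + hform u w2 A.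
Proof. by rewrite /hform !mulmxDr mxE. Qed.
Lemma hformZl c u w A : hform (c *: u) w A = c^* * hform u w A.
Proof. by rewrite /hform trmxC_scale -!scalemxAl mxE. Qed.
Lemma hformZr c u w A : hform u (c *: w) A = c * hform u w A.
Proof. by rewrite /hform -!scalemxAr mxE. Qed.
Lemma hform_delta A i j : hform (delta_mx i 0) (delta_mx j 0) A = A i j.
Proof.
by rewrite /hform trmx_delta map_delta_mx -rowE -colE !mxE.
Qed.

Lemma qformD v A B : qform v (A + B) = qform v A + qform v B.
Proof. by rewrite /qform /hform mulmxDr mulmxDl mxE. Qed.
Lemma qformZ c v A : qform v (c *: A) = c * qform v A.
Proof. by rewrite /qform /hform -scalemxAr -scalemxAl mxE. Qed.
Lemma qformN v A : qform v (- A) = - qform v A.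
Proof. by rewrite -scaleN1r qformZ mulN1r. Qed.
Lemma qform_trmxC v A : qform v (A^t*) = (qform v A)^*.
Proof. by rewrite /qform /hform -trmxC_mx11 !trmxC_mul trmxCK mulmxA. Qed.

Lemma qform_outer u v : qform v (u *m u^t*) = `|(v^t* *m u) 0 0| ^+ 2.
Proof.
rewrite normCK /qform /hform !mulmxA -[v^t* *m u *m u^t* *m v]mulmxA.
rewrite -[u^t* *m v]trmxCK trmxC_mul trmxCK.
by rewrite [in LHS]mxE big_ord1 trmxC_mx11.
Qed.

(* Polarization along [u + w] and [u + 'i w]; this needs complex scalars. *)
Lemma qform_eq0 A : (forall v, qform v A = 0) -> A = 0.
Proof.
move=> A0; apply/matrixP => i j; rewrite mxE -hform_delta.
set u := delta_mx i 0; set w := delta_mx j 0.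
have polar c : c * hform u w A + c^* * hform w u A = 0.
  have := A0 (u + c *: w); rewrite /qform !(hformDl, hformDr, hformZl, hformZr).
  by rewrite -!/(qform _ _) !A0 mulr0 !addr0 add0r addrC.
have := polar 1; have := polar 'i; rewrite conjCi conjC1 !mul1r mulNr.
move=> /eqP; rewrite subr_eq0 => /eqP /(mulfI (@neq0Ci C)) ->.
by move/eqP; rewrite -mulr2n mulrn_eq0 /= => /eqP.
Qed.

Lemma psdE A : psd A <-> forall v, 0 <= qform v A.
Proof. by []. Qed.

Lemma psd_hermitian A : psd A -> A^t* = A.
Proof.
move=> psdA; apply/eqP; rewrite -subr_eq0; apply/eqP/qform_eq0 => v.
rewrite qformD qformN qform_trmxC conj_Creal ?subrr //; exact/ger0_real/psdA.
Qed.

Lemma psd_outer u : psd (u *m u^t*).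
Proof. by apply/psdE => v; rewrite qform_outer exprn_ge0. Qed.

Lemma psd0 : psd (0 : 'M[C]_n).
Proof. by apply/psdE => v; rewrite /qform /hform mulmx0 mul0mx mxE. Qed.

Lemma psd1 : psd (1%:M : 'M[C]_n).
Proof.
apply/psdE => v; rewrite /qform /hform mulmx1 mxE sumr_ge0 // => k _.
by rewrite !mxE -normCKC exprn_ge0.
Qed.

Lemma psdD A B : psd A -> psd B -> psd (A + B).
Proof. by move=> psdA psdB; apply/psdE => v; rewrite qformD addr_ge0 ?psdA ?psdB. Qed.

Lemma psdZ c A : 0 <= c -> psd A -> psd (c *: A).
Proof. by move=> c_ge0 psdA; apply/psdE => v; rewrite qformZ mulr_ge0 ?psdA. Qed.

Lemma psd_convex c A B : psd A -> psd B -> 0 <= c <= 1 -> psd (A + c *: (B - A)).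
Proof.
move=> psdA psdB /andP[c_ge0 c_le1].
rewrite -[A in A + _]scale1r scalerBr addrA addrAC -scalerBl.
by apply: psdD; apply: psdZ; rewrite ?subr_ge0.
Qed.

Lemma unitmx_qform A : (forall v, v != 0 -> qform v A != 0) -> A \in unitmx.
Proof.
move=> qA; rewrite unitmxE unitfE; apply/det0P => -[u u_neq0 uA].
have : u^t* != 0.
  by apply: contra u_neq0 => /eqP u0; rewrite -[u]trmxCK u0 trmx0 map_mx0.
by move/qA; rewrite /qform /hform trmxCK uA mul0mx mxE eqxx.
Qed.

Lemma mxtrace_trmxC A : \tr (A^t*) = (\tr A)^*.
Proof. by rewrite /mxtrace rmorph_sum; apply: eq_bigr => i _; rewrite !mxE. Qed.

Lemma trace_mul_delta A i j : \tr (A *m delta_mx i j) = A j i.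
Proof.
rewrite -(mul_delta_mx (0 : 'I_1)) mulmxA mxtrace_mulC mulmxA -rowE -colE.
by rewrite trace_mx11 !mxE.
Qed.

Lemma trace_form_inj A B : (forall X, \tr (A^t* *m X) = \tr (B^t* *m X)) -> A = B.
Proof.
move=> trAB; apply/matrixP => i j; apply: (can_inj (@conjCK C)).
by have := trAB (delta_mx i j); rewrite !trace_mul_delta !mxE.
Qed.

Lemma hermitian_eigenbasis A : A^t* = A ->
  exists u : 'I_n -> 'cV[C]_n,
  [/\ forall N, \tr N = \sum_k qform (u k) N,
      forall N, \tr (N *m A) = \sum_k qform (u k) N * qform (u k) A
    & \det A = \prod_k qform (u k) A].
Proof.
move=> A_herm.
have /orthomx_spectralP A_spec : A \is normalmx by apply/normalmxP; rewrite A_herm.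
have P_unitary := spectral_unitarymx A.
set P := spectralmx A in A_spec P_unitary; set d := spectral_diag A in A_spec.
have PPt : P *m P^t* = 1%:M by apply/unitarymxP.
have PtP : P^t* *m P = 1%:M.
  by rewrite -(invmx_unitary P_unitary) mulVmx // unitarymx_unit.
rewrite invmx_unitary // in A_spec.
exists (fun k => P^t* *m delta_mx k 0).
have qformE N k : qform (P^t* *m delta_mx k 0) N = (P *m N *m P^t*) k k.
  by rewrite -hform_delta /qform /hform trmxC_mul trmxCK !mulmxA.
have eigenE k : qform (P^t* *m delta_mx k 0) A = d 0 k.
  rewrite qformE A_spec !mulmxA PPt mul1mx -!mulmxA PPt mulmx1.
  by rewrite mxE eqxx mulr1n.
split.
- move=> N; rewrite -[in LHS](mulmx1 N) -PtP mulmxA mxtrace_mulC mulmxA.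
  by apply: eq_bigr => k _; rewrite qformE.
- move=> N; rewrite [in LHS]A_spec !mulmxA mxtrace_mulC !mulmxA mul_mx_diag.
  by apply: eq_bigr => k _; rewrite mxE qformE eigenE.
- rewrite [in LHS]A_spec !det_mulmx det_diag mulrC mulrA -det_mulmx PPt det1 mul1r.
  by apply: eq_bigr => k _; rewrite eigenE.
Qed.

Lemma trace_mul_psd_ge0 N A : psd N -> psd A -> 0 <= \tr (N *m A).
Proof.
move=> psdN psdA; have [u [_ -> _]] := hermitian_eigenbasis (psd_hermitian psdA).
by apply: sumr_ge0 => k _; rewrite mulr_ge0 ?psdN ?psdA.
Qed.

Lemma trace_mul_psd_unit_gt0 S B :
  psd S -> \tr S != 0 -> psd B -> B \in unitmx -> 0 < \tr (S *m B).
Proof.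
move=> psdS trS_neq0 psdB B_unit.
have [u [trE -> detB]] := hermitian_eigenbasis (psd_hermitian psdB).
have term_ge0 k : 0 <= qform (u k) S * qform (u k) B by rewrite mulr_ge0 ?psdS ?psdB.
rewrite lt_def sumr_ge0 // andbT; apply: contra trS_neq0.
move=> /eqP /(psumr_eq0P (fun k _ => term_ge0 k)) terms0.
rewrite trE big1 // => k _; have /eqP := terms0 k isT.
move: B_unit; rewrite unitmxE detB unitfE => /prodf_neq0 /(_ k isT).
by rewrite mulf_eq0 => /negbTE -> /orP[/eqP|].
Qed.

End QuadraticForm.

Section DualMap.
Variables (C : numClosedFieldType) (n m : nat).
Variables (Psi : 'M[C]_n -> 'M[C]_m) (Psistar : 'M[C]_m -> 'M[C]_n).
Hypothesis dual : is_dual_map Psi Psistar.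

Lemma dual_mapD Y1 Y2 : Psistar (Y1 + Y2) = Psistar Y1 + Psistar Y2.
Proof.
apply: trace_form_inj => X.
by rewrite trmxC_add mulmxDl mxtraceD !dual trmxC_add mulmxDl mxtraceD.
Qed.

Lemma dual_mapZ c Y : Psistar (c *: Y) = c *: Psistar Y.
Proof.
apply: trace_form_inj => X.
by rewrite dual !trmxC_scale -!scalemxAl !mxtraceZ dual.
Qed.

Lemma dual_map0 : Psistar 0 = 0.
Proof. by rewrite -(scale0r 0) dual_mapZ scale0r. Qed.

Lemma dual_map_hermitian_preserving :
  hermitian_preserving Psi -> hermitian_preserving Psistar.
Proof.
move=> Psi_herm Y; apply: trace_form_inj => X; rewrite dual !trmxCK.
rewrite -[RHS]conjCK -mxtrace_trmxC trmxC_mul [in RHS]mxtrace_mulC dual Psi_herm.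
by rewrite -trmxC_mul mxtrace_trmxC conjCK mxtrace_mulC.
Qed.

Lemma semi_positive_dual_exclusive :
  ~ (semi_positive Psi /\ semi_nonnegative (fun Y => - Psistar Y)).
Proof.
case=> -[rho [[[psd_rho _] _] [[psd_Psi_rho _] Psi_rho_unit]]].
case=> sigma [[psd_sigma tr_sigma] psd_Psistar].
have Psistar_herm : (Psistar sigma)^t* = Psistar sigma.
  by apply: oppr_inj; rewrite -trmxC_opp psd_hermitian.
have := dual rho sigma; rewrite Psistar_herm (psd_hermitian psd_sigma) => tr_eq.
have := trace_mul_psd_unit_gt0 psd_sigma _ psd_Psi_rho Psi_rho_unit.
rewrite tr_sigma oner_neq0 -tr_eq => /(_ isT).
have := trace_mul_psd_ge0 psd_Psistar psd_rho.
by rewrite mulNmx linearN oppr_ge0 => /le_lt_trans /[apply]; rewrite ltxx.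
Qed.

End DualMap.

Section ComplexQuadraticForm.
Variables (R : rcfType) (n : nat).
Local Notation Re := (@complex.Re R).
Local Notation Im := (@complex.Im R).
Implicit Types (A B : 'M[R[i]]_n) (u v : 'cV[R[i]]_n).

Lemma qform_redot v A : Re (qform v A) = redot (v *m v^t*) A.
Proof.
by rewrite redot_trace trmxC_mul trmxCK -mulmxA mxtrace_mulC trace_mx11.
Qed.

Lemma qform_hermitian v A : A^t* = A -> qform v A = (Re (qform v A))%:C.
Proof.
move=> A_herm; apply: complex_eq_Re.
have := congr1 Im (qform_trmxC v A); rewrite A_herm ImJ => /eqP.
by rewrite -addr_eq0 -mulr2n mulrn_eq0 /= => /eqP.
Qed.

Lemma col_sqr_norm v : (v^t* *m v) 0 0 = (redot v v)%:C.
Proof.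
rewrite mxE /redot rmorph_sum; apply: eq_bigr => k _; rewrite big_ord1 !mxE.
by case: (v k 0) => a b /=; congr (_ +i* _); ring.
Qed.

Lemma qform1 v : qform v 1%:M = (redot v v)%:C.
Proof. by rewrite /qform /hform mulmx1 col_sqr_norm. Qed.

Lemma trace_outer v : \tr (v *m v^t*) = (redot v v)%:C.
Proof. by rewrite mxtrace_mulC trace_mx11 col_sqr_norm. Qed.

Lemma redot_outer v : redot (v *m v^t*) (v *m v^t*) = redot v v ^+ 2.
Proof.
rewrite -qform_redot qform_outer col_sqr_norm ger0_norm ?ler0c ?redot_ge0 //.
by rewrite -rmorphXn.
Qed.

Lemma outer_box v : mx_box (redot v v) (v *m v^t*).
Proof.
move=> i j; rewrite !mxE big_ord1 !mxE Re_mulc Im_mulc ReJ ImJ.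
have := redot_entry_le v i 0; have := redot_entry_le v j 0.
set a1 := Re (v i 0); set a2 := Im (v i 0); set b1 := Re (v j 0); set b2 := Im (v j 0).
move=> vj vi; rewrite !ler_norml.
have := sqr_ge0 (a1 - b1); have := sqr_ge0 (a2 - b2); have := sqr_ge0 (a1 + b1).
have := sqr_ge0 (a2 + b2); have := sqr_ge0 (a1 - b2); have := sqr_ge0 (a2 + b1).
have := sqr_ge0 (a1 + b2); have := sqr_ge0 (a2 - b1).
rewrite !expr2 in vi vj *; move=> *; split; apply/andP; split; nra.
Qed.

Lemma qform_lower_bound B v : - ((1 + redot B B) / 2) * redot v v <= Re (qform v B).
Proof.
have [->|v_neq0] := eqVneq v 0.
  by rewrite redot0r mulr0 /qform /hform mulmx0 mxE.
have v_gt0 := redot_gt0 v_neq0.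
have : 0 < (redot v v)^-1 by rewrite invr_gt0.
move/(redot_AMGM (v *m v^t*) B).
rewrite redot_outer invrK -qform_redot expr2 mulKf ?gt_eqF // => AMGM.
have := ler_norm (- Re (qform v B)); rewrite normrN.
have := redot_ge0 B; nra.
Qed.

Lemma psd_unit_of_qform_ge e A : 0 < e -> A^t* = A ->
  (forall v, e * redot v v <= Re (qform v A)) -> psd A /\ A \in unitmx.
Proof.
move=> e_gt0 A_herm A_ge; split.
  apply/psdE => v; rewrite qform_hermitian // ler0c.
  exact: le_trans (mulr_ge0 (ltW e_gt0) (redot_ge0 v)) (A_ge v).
apply: unitmx_qform => v v_neq0; rewrite qform_hermitian // (inj_eq (@complexI R)) gt_eqF //.
exact: lt_le_trans (mulr_gt0 e_gt0 (redot_gt0 v_neq0)) (A_ge v).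
Qed.

End ComplexQuadraticForm.

Section Normalization.
Variables (C : numClosedFieldType) (n m : nat).
Variable Psi : {linear 'M[C]_n.+1 -> 'M[C]_m.+1}.
Hypothesis Psi_tr : trace_preserving Psi.

Lemma invertible_density_normalize k (A : 'M[C]_k.+1) :
  psd A -> A \in unitmx -> invertible_density ((\tr A)^-1 *: A).
Proof.
move=> psdA A_unit.
have := trace_mul_psd_unit_gt0 (@psd1 C k.+1) _ psdA A_unit.
rewrite mxtrace1 pnatr_eq0 mul1mx => /(_ isT) tr_gt0.
have tr_unit : (\tr A)^-1 \is a GRing.unit by rewrite unitfE invr_eq0 gt_eqF.
split; last by rewrite unitmxZ.
split; first by apply: psdZ => //; rewrite invr_ge0 ltW.
by rewrite mxtraceZ mulVf ?gt_eqF.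
Qed.

Lemma semi_positive_of_pd A :
  psd A -> A \in unitmx -> psd (Psi A) -> Psi A \in unitmx -> semi_positive Psi.
Proof.
move=> psdA A_unit psdPA PA_unit; exists ((\tr A)^-1 *: A).
split; first exact: invertible_density_normalize.
by rewrite linearZ /= -Psi_tr; exact: invertible_density_normalize.
Qed.

End Normalization.

Section Witness.
Variables (R : rcfType) (n m : nat).
Local Notation Re := (@complex.Re R).
Variable Psi : {linear 'M[R[i]]_n.+1 -> 'M[R[i]]_m.+1}.
Hypotheses (Psi_herm : hermitian_preserving Psi) (Psi_tr : trace_preserving Psi).

(* Adding a small multiple of the identity makes [w] positive definite while keeping
   [Psi w] positive definite, the loss being controlled by [qform_lower_bound]. *)
Lemma semi_positive_of_witness e w : 0 < e -> w^t* = w ->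
  (forall v, 0 <= Re (qform v w)) -> (forall v, e * redot v v <= Re (qform v (Psi w))) ->
  semi_positive Psi.
Proof.
move=> e_gt0 w_herm w_ge0 Psi_w_ge.
have k_gt0 : 0 < 1 + redot (Psi 1%:M) (Psi 1%:M) by rewrite ltr_pwDl // redot_ge0.
have [d d_gt0 d_def] : exists2 d, 0 < d & d * (1 + redot (Psi 1%:M) (Psi 1%:M)) = e / 2.
  by exists (e / 2 / (1 + redot (Psi 1%:M) (Psi 1%:M))); rewrite ?divfK ?gt_eqF ?divr_gt0.
have r_herm : (w + d%:C *: 1%:M)^t* = w + d%:C *: 1%:M.
  by rewrite trmxC_add w_herm trmxC_scale conjC_real_complex trmx1 map_mx1.
have r_ge v : d * redot v v <= Re (qform v (w + d%:C *: 1%:M)).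
  by rewrite qformD ReD qformZ qform1 Re_realM Re_real; have := w_ge0 v; lra.
have Psi_r : Psi (w + d%:C *: 1%:M) = Psi w + d%:C *: Psi 1%:M by rewrite linearD linearZ.
have Psi_r_ge v : e / 2 * redot v v <= Re (qform v (Psi (w + d%:C *: 1%:M))).
  rewrite Psi_r qformD ReD qformZ Re_realM.
  have := ler_wpM2l (ltW d_gt0) (qform_lower_bound (Psi 1%:M) v).
  have := congr1 ( *%R^~ (redot v v)) d_def.
  have := mulr_ge0 (ltW e_gt0) (redot_ge0 v); have := Psi_w_ge v.
  by set a := Re (qform v (Psi w)); set b := Re (qform v _); rewrite /=; lra.
have [psd_r r_unit] := psd_unit_of_qform_ge d_gt0 r_herm r_ge.
have Psi_r_herm : (Psi (w + d%:C *: 1%:M))^t* = Psi (w + d%:C *: 1%:M).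
  by rewrite -Psi_herm r_herm.
have e2_gt0 : 0 < e / 2 by rewrite divr_gt0.
have [psd_Psi_r Psi_r_unit] := psd_unit_of_qform_ge e2_gt0 Psi_r_herm Psi_r_ge.
exact: semi_positive_of_pd psd_r r_unit psd_Psi_r Psi_r_unit.
Qed.

End Witness.

Local Open Scope classical_set_scope.

Section RealLinearFunctionals.
Variables (R : realType) (N : nat).
Local Notation Re := (@complex.Re R).
Local Notation Im := (@complex.Im R).
Implicit Types (f : 'rV[R]_N -> R) (g : 'rV[R]_N -> R[i]).

Lemma continuous_sum I (s : seq I) (F : I -> 'rV[R]_N -> R) :
  (forall i, continuous (F i)) -> continuous (fun x => \sum_(i <- s) F i x).
Proof.
move=> F_cont; elim: s => [|i s IH] x.
  rewrite (_ : (fun _ => _) = fun _ => 0); first exact: cst_continuous.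
  by apply: boolp.funext => y; rewrite big_nil.
rewrite (_ : (fun _ => _) = (fun y => F i y + \sum_(j <- s) F j y)).
  exact: continuousD (F_cont i x) (IH x).
by apply: boolp.funext => y; rewrite big_cons.
Qed.

Lemma continuous_real_linear f :
  (forall r x y, f (r *: x + y) = r * f x + f y) -> continuous f.
Proof.
move=> f_lin.
have f0 : f 0 = 0.
  by have := f_lin 1 0 0; rewrite scale1r addr0 mul1r; lra.
have fD : {morph f : x y / x + y} by move=> x y; rewrite -{1}[x]scale1r f_lin mul1r.
have -> : f = fun x => \sum_(k <- index_enum 'I_N) x 0 k * f (delta_mx 0 k).
  apply: boolp.funext => x; rewrite [in LHS](row_sum_delta x) (big_morph f fD f0).
  by apply: eq_bigr => k _; rewrite -[_ *: _]addr0 f_lin f0 addr0.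
apply: continuous_sum => k x; apply: continuousM; first exact: coord_continuous.
exact: cst_continuous.
Qed.

Definition real_linear g := forall r x y, g (r *: x + y) = r%:C * g x + g y.

Lemma continuous_real_linear_Re g : real_linear g -> continuous (fun x => Re (g x)).
Proof.
move=> g_lin; apply: continuous_real_linear => r x y.
by rewrite g_lin ReD Re_realM.
Qed.

Lemma continuous_real_linear_Im g : real_linear g -> continuous (fun x => Im (g x)).
Proof.
move=> g_lin; apply: continuous_real_linear => r x y.
by rewrite g_lin ImD Im_realM.
Qed.

Lemma closed_preimage f (D : set R) : continuous f -> closed D -> closed [set x | D (f x)].
Proof. by move=> f_cont; apply: preimage_closed => x _; exact: f_cont. Qed.

Lemma closed_forall (T : topologicalType) (I : Type) (P : I -> set T) :
  (forall i, closed (P i)) -> closed [set x | forall i, P i x].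
Proof.
move=> P_closed; have -> : [set x | forall i, P i x] = \bigcap_(i in setT) P i.
  by apply/seteqP; split => x /= Px i //; exact: Px.
exact: closed_bigI.
Qed.

Lemma closed_real_linear_ge0 g : real_linear g -> closed [set x | 0 <= g x].
Proof.
move=> g_lin; have -> : [set x | 0 <= g x] = [set x | Im (g x) = 0] `&` [set x | 0 <= Re (g x)].
  apply/seteqP; split => x /=; rewrite lecE /=; first by case/andP => /eqP.
  by case=> -> ->; rewrite eqxx.
apply: closedI.
  exact (closed_preimage (continuous_real_linear_Im g_lin) (@closed_eq R 0)).
exact (closed_preimage (continuous_real_linear_Re g_lin) (@closed_ge R 0)).
Qed.

Lemma closed_real_linear_eq g c : real_linear g -> closed [set x | g x = c].
Proof.
move=> g_lin; have -> : [set x | g x = c] = [set x | Re (g x) = Re c] `&` [set x | Im (g x) = Im c].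
  by apply/seteqP; split => x /= => [->|]; [|case: (g x) c => ? ? [] ? ? /= [-> ->]].
apply: closedI.
  exact (closed_preimage (continuous_real_linear_Re g_lin) (@closed_eq R _)).
exact (closed_preimage (continuous_real_linear_Im g_lin) (@closed_eq R _)).
Qed.

Lemma closed_real_linear_box g c : real_linear g ->
  closed [set x | `|Re (g x)| <= c /\ `|Im (g x)| <= c].
Proof.
move=> g_lin; have norm_le_closed : closed [set y : R | `|y| <= c].
  exact (preimage_closed (fun y _ => @norm_continuous _ R^o y) (@closed_le R c)).
apply: closedI.
  exact (closed_preimage (continuous_real_linear_Re g_lin) norm_le_closed).
exact (closed_preimage (continuous_real_linear_Im g_lin) norm_le_closed).
Qed.

Definition real_linear_mx a b (M : 'rV[R]_N -> 'M[R[i]]_(a, b)) :=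
  forall r x y, M (r *: x + y) = r%:C *: M x + M y.

Lemma closed_mx_box a b c (M : 'rV[R]_N -> 'M[R[i]]_(a, b)) :
  real_linear_mx M -> closed [set x | mx_box c (M x)].
Proof.
move=> M_lin; apply: closed_forall => i; apply: closed_forall => j.
by apply: closed_real_linear_box => r x y; rewrite M_lin !mxE.
Qed.

Lemma closed_psd a (M : 'rV[R]_N -> 'M[R[i]]_a) :
  real_linear_mx M -> closed [set x | psd (M x)].
Proof.
move=> M_lin; apply: closed_forall => v.
have qform_lin : real_linear (fun x => qform v (M x)).
  by move=> r x y; rewrite M_lin qformD qformZ.
exact (closed_real_linear_ge0 qform_lin).
Qed.

Lemma closed_trace_eq a c (M : 'rV[R]_N -> 'M[R[i]]_a) :
  real_linear_mx M -> closed [set x | \tr (M x) = c].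
Proof.
by move=> M_lin; apply: closed_real_linear_eq => r x y; rewrite M_lin mxtraceD mxtraceZ.
Qed.

End RealLinearFunctionals.

Section Coordinates.
Variables (R : realType) (p q : nat).
Local Notation Re := (@complex.Re R).
Local Notation Im := (@complex.Im R).

(* Real coordinates of a pair of complex matrices [(S, Q) : 'M_q * 'M_p]:
   real parts of [S], imaginary parts of [S], then the same for [Q]. *)
Definition coord_dim := (q * q + q * q + (p * p + p * p))%N.
Local Notation coords := 'rV[R]_coord_dim.

Definition sigma_of (x : coords) : 'M[R[i]]_q := \matrix_(i, j)
  (x 0 (lshift _ (lshift _ (mxvec_index i j))) +i* x 0 (lshift _ (rshift _ (mxvec_index i j)))).
Definition Q_of (x : coords) : 'M[R[i]]_p := \matrix_(i, j)
  (x 0 (rshift _ (lshift _ (mxvec_index i j))) +i* x 0 (rshift _ (rshift _ (mxvec_index i j)))).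
Definition coords_of (S : 'M[R[i]]_q) (Q : 'M[R[i]]_p) : coords :=
  row_mx (row_mx (mxvec (map_mx Re S)) (mxvec (map_mx Im S)))
         (row_mx (mxvec (map_mx Re Q)) (mxvec (map_mx Im Q))).

Lemma sigma_of_coords S Q : sigma_of (coords_of S Q) = S.
Proof.
apply/matrixP => i j; rewrite mxE /coords_of !row_mxEl row_mxEr !mxvecE !mxE.
by case: (S i j).
Qed.

Lemma Q_of_coords S Q : Q_of (coords_of S Q) = Q.
Proof.
apply/matrixP => i j; rewrite mxE /coords_of !row_mxEr row_mxEl !mxvecE !mxE.
by case: (Q i j).
Qed.

Lemma sigma_of_linear : real_linear_mx sigma_of.
Proof. by move=> r x y; apply/matrixP => i j; rewrite !mxE /=; congr (_ +i* _); ring. Qed.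

Lemma Q_of_linear : real_linear_mx Q_of.
Proof. by move=> r x y; apply/matrixP => i j; rewrite !mxE /=; congr (_ +i* _); ring. Qed.

Lemma coords_bound (x : coords) c : mx_box c (sigma_of x) -> mx_box c (Q_of x) ->
  forall k, `|x 0 k| <= c.
Proof.
move=> S_box Q_box k.
case: (split_ordP k) => [k1 ->|k2 ->].
  case: (split_ordP k1) => [k3 ->|k3 ->]; case/mxvec_indexP: k3 => i j;
  by have := S_box i j; rewrite !mxE => -[].
case: (split_ordP k2) => [k3 ->|k3 ->]; case/mxvec_indexP: k3 => i j;
by have := Q_box i j; rewrite !mxE => -[].
Qed.

End Coordinates.

Arguments sigma_of_linear {R p q}.
Arguments Q_of_linear {R p q}.

Section NearestPoint.
Variables (R : realType) (n m : nat).
Local Notation p := n.+1.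
Local Notation q := m.+1.
Local Notation Re := (@complex.Re R).
Local Notation Im := (@complex.Im R).
Variables (Psi : {linear 'M[R[i]]_p -> 'M[R[i]]_q}) (Psistar : 'M[R[i]]_q -> 'M[R[i]]_p).
Hypotheses (Psi_herm : hermitian_preserving Psi) (Psi_tr : trace_preserving Psi).
Hypothesis dual : is_dual_map Psi Psistar.

Local Notation coords := 'rV[R]_(coord_dim p q).
Local Notation sigma_of := (@sigma_of R p q).
Local Notation Q_of := (@Q_of R p q).
Local Notation coords_of := (@coords_of R p q).

Lemma redot_dual Y X : redot (Psistar Y) X = redot Y (Psi X).
Proof. by rewrite !redot_trace dual. Qed.

(* [residual] ranges over the convex set [{Psistar sigma + Q | sigma density, Q psd}],
   which contains [0] exactly when [- Psistar] is semi-nonnegative. *)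
Definition residual (x : coords) := Psistar (sigma_of x) + Q_of x.
Definition cost x := redot (residual x) (residual x).

Lemma residual_linear : real_linear_mx residual.
Proof.
move=> r x y; rewrite /residual sigma_of_linear Q_of_linear.
by rewrite (dual_mapD dual) (dual_mapZ dual) scalerDr addrACA.
Qed.

Lemma residualB x y : residual (x - y) = residual x - residual y.
Proof. by rewrite addrC -scaleN1r residual_linear rmorphN1 scaleN1r addrC. Qed.

Lemma continuous_cost : continuous cost.
Proof.
apply: continuous_sum => i; apply: continuous_sum => j.
have entry_lin : real_linear (fun x => residual x i j).
  by move=> r x y; rewrite residual_linear !mxE.
have Re_cont := continuous_real_linear_Re entry_lin.
have Im_cont := continuous_real_linear_Im entry_lin.
move=> x; exact: continuousD (continuousM (Re_cont x) (Re_cont x))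
  (continuousM (Im_cont x) (Im_cont x)).
Qed.

Definition e00 : 'M[R[i]]_q := delta_mx 0 0.

(* Large enough for the slack part of a minimizer to lie strictly inside its box. *)
Definition slack_bound : R := 2 + redot (Psistar e00) (Psistar e00) +
  \sum_i \sum_j (mx_l1 (Psi (delta_mx i j)) + mx_l1 (Psi ('i%C *: delta_mx i j))).

Lemma slack_bound_ge : 2 + redot (Psistar e00) (Psistar e00) <= slack_bound.
Proof.
by rewrite lerDl sumr_ge0 // => i _; rewrite sumr_ge0 // => j _; rewrite addr_ge0 ?mx_l1_ge0.
Qed.

Definition feasible (x : coords) := [/\ mx_box 1 (sigma_of x),
  mx_box slack_bound (Q_of x), psd (sigma_of x), \tr (sigma_of x) = 1 & psd (Q_of x)].

Lemma feasible_closed : closed feasible.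
Proof.
have -> : feasible = [set x | mx_box 1 (sigma_of x)] `&` [set x | mx_box slack_bound (Q_of x)]
    `&` [set x | psd (sigma_of x)] `&` [set x | \tr (sigma_of x) = 1] `&` [set x | psd (Q_of x)].
  by apply/seteqP; split => x /= => [[]|[[[[]]]]].
repeat apply: closedI.
- exact (closed_mx_box sigma_of_linear).
- exact (closed_mx_box Q_of_linear).
- exact (closed_psd sigma_of_linear).
- exact (closed_trace_eq sigma_of_linear).
- exact (closed_psd Q_of_linear).
Qed.

Lemma feasible_compact : compact feasible.
Proof.
apply: (subclosed_compact feasible_closed (@rV_compact _ _
  (fun=> `[- slack_bound, slack_bound]%classic) (fun=> @segment_compact R _ _))).
move=> x [S_box Q_box _ _ _] k /=.
have one_le : 1 <= slack_bound by have := slack_bound_ge; have := redot_ge0 (Psistar e00); lra.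
have S_box' : mx_box slack_bound (sigma_of x).
  by move=> i j; have [? ?] := S_box i j; split; apply: le_trans one_le.
by rewrite in_itv /= -ler_norml (coords_bound S_box' Q_box).
Qed.

Lemma feasible_density S : mx_box 1 S -> psd S -> \tr S = 1 -> feasible (coords_of S 0).
Proof.
move=> S_box psd_S tr_S; rewrite /feasible sigma_of_coords Q_of_coords.
split=> //; last exact: psd0.
move=> i j; rewrite mxE /= normr0; split; apply: le_trans slack_bound_ge;
by have := redot_ge0 (Psistar e00); lra.
Qed.

Lemma feasible_e00 : feasible (coords_of e00 0).
Proof.
have e00_outer : e00 = (delta_mx 0 0 : 'cV_q) *m (delta_mx 0 0 : 'cV_q)^t*.
  by rewrite trmx_delta map_delta_mx mul_delta_mx.
apply: feasible_density.
- by move=> i j; rewrite mxE; case: (_ && _); rewrite /= ?normr1 ?normr0 ?ler01.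
- by rewrite e00_outer; exact: psd_outer.
- by rewrite e00_outer trace_outer redot_delta mxE eqxx.
Qed.

Lemma feasible_convex x z t : feasible x -> feasible z -> 0 <= t <= 1 ->
  feasible (x + t *: (z - x)).
Proof.
have convex_comb (a : nat) (M : coords -> 'M[R[i]]_a) : real_linear_mx M ->
    M (x + t *: (z - x)) = M x + t%:C *: (M z - M x).
  move=> M_lin; rewrite addrC M_lin addrC; congr (_ + _ *: _).
  by rewrite addrC -scaleN1r M_lin rmorphN1 scaleN1r addrC.
move=> [Sx_box Qx_box psd_Sx tr_Sx psd_Qx] [Sz_box Qz_box psd_Sz tr_Sz psd_Qz] t01.
rewrite /feasible (convex_comb _ _ sigma_of_linear) (convex_comb _ _ Q_of_linear).
have t01C : 0 <= (t%:C : R[i]) <= 1 by rewrite !lecE /= !eqxx.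
split; [exact: mx_box_convex | exact: mx_box_convex | exact: psd_convex |
  | exact: psd_convex].
by rewrite mxtraceD mxtraceZ linearB /= tr_Sx tr_Sz subrr mulr0 addr0.
Qed.

Section Minimizer.
Variable x0 : coords.
Hypotheses (x0_feasible : feasible x0) (x0_min : forall x, feasible x -> cost x0 <= cost x).
Local Notation w0 := (residual x0).

Lemma minimizer_dir y e : 0 < e ->
  (forall t, 0 < t -> t <= e -> feasible (x0 + t *: y)) -> 0 <= redot w0 (residual y).
Proof.
move=> e_gt0 feas; apply: (ge0_of_small_quadratic e_gt0 (redot_ge0 (residual y))).
move=> t t_gt0 t_le_e; have := x0_min (feas t t_gt0 t_le_e).
rewrite /cost addrC residual_linear; move: (residual y) w0 => u w.
rewrite redotDl !redotDr !redotZl !redotZr (redotC u w).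
by set a := redot w u; set b := redot u u; set c := redot w w; lra.
Qed.

Lemma minimizer_variational z : feasible z -> 0 <= redot w0 (residual z - w0).
Proof.
move=> z_feasible; rewrite -residualB; apply: (minimizer_dir ltr01) => t t_gt0 t_le1.
by apply: feasible_convex; rewrite ?(ltW t_gt0).
Qed.

Lemma minimizer_cost_le : cost x0 <= redot (Psistar e00) (Psistar e00).
Proof.
have := x0_min feasible_e00.
by rewrite /cost /residual sigma_of_coords Q_of_coords addr0.
Qed.

Lemma minimizer_slack_box : mx_box (slack_bound - 1) (Q_of x0).
Proof.
have [S_box _ _ _ _] := x0_feasible.
move=> i j.
have -> : Q_of x0 i j = w0 i j - Psistar (sigma_of x0) i j.
  by rewrite !mxE addrAC subrr add0r.
rewrite ReD ImD (ReN (Psistar _ i j)) (ImN (Psistar _ i j)).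
have L_le : mx_l1 (Psi (delta_mx i j)) + mx_l1 (Psi ('i%C *: delta_mx i j)) <=
    \sum_i \sum_j (mx_l1 (Psi (delta_mx i j)) + mx_l1 (Psi ('i%C *: delta_mx i j))).
  by apply: ler_sum_sum_entry => k l; rewrite addr_ge0 ?mx_l1_ge0.
have PRe_le : `|Re (Psistar (sigma_of x0) i j)| <= mx_l1 (Psi (delta_mx i j)).
  by rewrite -redot_delta redotC redot_dual redot_box_le.
have PIm_le : `|Im (Psistar (sigma_of x0) i j)| <= mx_l1 (Psi ('i%C *: delta_mx i j)).
  by rewrite -redot_idelta redotC redot_dual redot_box_le.
have := minimizer_cost_le; have := redot_entry_le w0 i j; rewrite /cost /slack_bound.
have := sqr_ge0 (Re (w0 i j)); have := sqr_ge0 (Im (w0 i j)).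
move: (Re (w0 i j)) (Im (w0 i j)) (redot w0 w0) => a b c b2_ge0 a2_ge0 abc cF.
have a_le : `|a| <= 1 + redot (Psistar e00) (Psistar e00) by apply: norm_le_of_sqr; lra.
have b_le : `|b| <= 1 + redot (Psistar e00) (Psistar e00) by apply: norm_le_of_sqr; lra.
have := mx_l1_ge0 (Psi (delta_mx i j)); have := mx_l1_ge0 (Psi ('i%C *: delta_mx i j)).
by split; apply: le_trans (ler_normB _ _) _; lra.
Qed.

Lemma minimizer_qform_ge0 v : 0 <= Re (qform v w0).
Proof.
have [S_box _ psd_S tr_S psd_Q] := x0_feasible.
pose y := coords_of 0 (v *m v^t*).
have e_gt0 : 0 < (1 + redot v v)^-1 by rewrite invr_gt0 ltr_pwDl // redot_ge0.
have := minimizer_dir (y := y) e_gt0.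
have -> : residual y = v *m v^t*.
  by rewrite /residual sigma_of_coords Q_of_coords (dual_map0 dual) add0r.
rewrite redotC -qform_redot; apply => t t_gt0 t_le.
have shift (a : nat) (M : coords -> 'M[R[i]]_a) : real_linear_mx M ->
  M (x0 + t *: y) = t%:C *: M y + M x0 by move=> M_lin; rewrite addrC M_lin.
rewrite /feasible (shift _ _ sigma_of_linear) (shift _ _ Q_of_linear).
rewrite sigma_of_coords Q_of_coords scaler0 add0r; split => //; last first.
  have t_ge0 : 0 <= (t%:C : R[i]) by rewrite ler0c ltW.
  by apply: psdD => //; exact: psdZ t_ge0 (psd_outer v).
have tv_le : t * redot v v <= 1.
  have V1_gt0 : 0 < 1 + redot v v by rewrite ltr_pwDl // redot_ge0.
  have := ler_wpM2r (ltW V1_gt0) t_le; rewrite mulVf ?gt_eqF //.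
  by have := ltW t_gt0; lra.
move=> i j.
have -> : (t%:C *: (v *m v^t*) + Q_of x0) i j = t%:C * (v *m v^t*) i j + Q_of x0 i j.
  by rewrite !mxE.
rewrite ReD ImD Re_realM Im_realM.
have [VRe VIm] := outer_box v i j; have [QRe QIm] := minimizer_slack_box i j.
have tVRe := ler_wpM2l (ltW t_gt0) VRe; have tVIm := ler_wpM2l (ltW t_gt0) VIm.
by split; apply: le_trans (ler_normD _ _) _; rewrite normrM gtr0_norm //; lra.
Qed.

Lemma minimizer_slack_le0 : redot w0 (Q_of x0) <= 0.
Proof.
have [S_box _ psd_S tr_S _] := x0_feasible.
have := minimizer_variational (feasible_density S_box psd_S tr_S).
have -> : residual (coords_of (sigma_of x0) 0) - w0 = - Q_of x0.
  by rewrite /residual sigma_of_coords Q_of_coords addr0 opprD addNKr.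
by rewrite redotNr oppr_ge0.
Qed.

Lemma minimizer_Psi_qform_ge v : cost x0 * redot v v <= Re (qform v (Psi w0)).
Proof.
have [_ Q_box _ _ psd_Q] := x0_feasible.
have [->|v_neq0] := eqVneq v 0.
  by rewrite redot0r mulr0 /qform /hform mulmx0 mxE.
have v_gt0 := redot_gt0 v_neq0.
pose s := (redot v v)^-1%:C *: (v *m v^t*).
have feasible_s : feasible (coords_of s (Q_of x0)).
  rewrite /feasible sigma_of_coords Q_of_coords; split.
  - move=> i j; have [VRe VIm] := outer_box v i j.
    rewrite mxE Re_realM Im_realM !normrM ger0_norm; last by rewrite invr_ge0 ltW.
    by split; rewrite -(ler_pM2l v_gt0) mulrA mulfV ?gt_eqF // mul1r mulr1.
  - exact: Q_box.
  - by apply: psdZ; [rewrite ler0c invr_ge0 ltW | exact: psd_outer].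
  - by rewrite mxtraceZ trace_outer -rmorphM mulVf ?gt_eqF.
  - exact: psd_Q.
have := minimizer_variational feasible_s; have := minimizer_slack_le0.
have -> : residual (coords_of s (Q_of x0)) = Psistar s + Q_of x0.
  by rewrite /residual sigma_of_coords Q_of_coords.
rewrite redotBr redotDr (redotC w0 (Psistar s)).
rewrite redot_dual redotZl -qform_redot /cost.
move: (Re (qform v (Psi w0))) (redot w0 (Q_of x0)) (redot w0 w0) => a b c b_le0 abc.
have c_le : c <= (redot v v)^-1 * a by lra.
have := ler_wpM2r (ltW v_gt0) c_le.
by rewrite mulrAC mulVf ?gt_eqF // mul1r.
Qed.

End Minimizer.

Lemma semi_positive_or_semi_nonnegative :
  semi_positive Psi \/ semi_nonnegative (fun Y => - Psistar Y).
Proof.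
have [x0 x0_feasible x0_min] :
    exists2 x0, feasible x0 & forall x, feasible x -> cost x0 <= cost x.
  have [x0 x0_in x0_min] := compact_EVT_min (ex_intro _ _ feasible_e00) feasible_compact
    (continuous_subspaceT continuous_cost).
  by exists x0 => [|x x_feasible]; [rewrite inE in x0_in | apply: x0_min; rewrite inE].
have [_ _ psd_S tr_S psd_Q] := x0_feasible.
have := redot_ge0 (residual x0); rewrite le_eqVlt => /orP[/eqP/esym cost0|cost_gt0].
  right; exists (sigma_of x0); split; first by split.
  have /eqP := redot_eq0 cost0; rewrite addr_eq0 => /eqP ->.
  by rewrite opprK.
left; apply: (semi_positive_of_witness Psi_herm Psi_tr (w := residual x0) cost_gt0).
- by rewrite /residual trmxC_add -(dual_map_hermitian_preserving dual Psi_herm) !psd_hermitian.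
- exact: minimizer_qform_ge0.
- exact: minimizer_Psi_qform_ge.
Qed.

End NearestPoint.

Theorem theorem5 (R : realType) (n m : nat)
    (Psi : {linear 'M[R[i]]_n.+1 -> 'M[R[i]]_m.+1})
    (Psistar : 'M[R[i]]_m.+1 -> 'M[R[i]]_n.+1) :
  hermitian_preserving Psi -> trace_preserving Psi ->
  is_dual_map Psi Psistar ->
  let P1 := semi_positive Psi in
  let P2 := semi_nonnegative (fun Y => - Psistar Y) in
  (P1 \/ P2) /\ ~ (P1 /\ P2).
Proof.
move=> Psi_herm Psi_tr dual P1 P2; split.
- exact: semi_positive_or_semi_nonnegative.
- exact: semi_positive_dual_exclusive.
Qed.
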